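(* Let $X$ be an amoebot structure with $n$ amoebots satisfying the standing assumptions below, and let $S_1,S_2\subseteq X$ be non-empty. Suppose an $S_1$-shortest path forest and an $S_2$-shortest path forest are given (each amoebot knows whether it is in $S_1$, in $S_2$, and its parent in each forest). There is an algorithm in the reconfigurable circuit model (the merging algorithm) that computes an $(S_1\cup S_2)$-shortest path forest within $O(\log n)$ rounds.
   Context: Geometric amoebot model with reconfigurable circuits: $G_\Delta$ is the infinite regular triangular grid graph; an amoebot structure is a finite set $X$ of grid nodes, $n=|X|$, each occupied by an anonymous constant-memory amoebot, with $G_X=(X,E_X)$ the induced subgraph, assumed connected. Each edge of $G_X$ is replaced by a constant number of external links with pins at both endpoints (labeling agreed by neighbors); each amoebot partitions its pins into partition sets; circuits are connected components of the graph on all partition sets joined by external links. In synchronous rounds every amoebot may update its state, change its partition and beep on partition sets; beeps are received at the start of the next round by all partition sets of the same circuit (without sender identity or count). Standing assumptions: $X$ has no holes (the subgraph induced by $V_\Delta\setminus X$ is connected), amoebots share compass orientation and chirality, and a unique leader is known. An $S$-shortest path forest is a family of rooted trees $T_s=(V_s,E_s)$, $s\in S$, $V_s\subseteq X$, $E_s\subseteq E_X$, rooted at $s$, with pairwise disjoint $V_s$ covering $X$, such that for every $u\in V_s$ the tree path from $s$ to $u$ is a shortest path in $G_X$ and $s$ is a closest amoebot of $S$ to $u$; computing it means every amoebot not in $S$ knows its parent. *)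

From HB Require Import structures.
From mathcomp Require Import all_boot all_order all_algebra.
From mathcomp Require Import finmap.
Set Implicit Arguments. Unset Strict Implicit. Unset Printing Implicit Defensive.
Import GRing.Theory Num.Theory.
Local Open Scope fset_scope.

Definition node := (int * int)%type.

(* The six global directions (shared compass orientation and chirality). *)
Definition dirv (d : 'I_6) : int * int :=
  match val d with
  | 0 => ((Posz 1), (Posz 0)) | 1 => ((Posz 0), (Posz 1)) | 2 => ((Negz 0), (Posz 1))
  | 3 => ((Negz 0), (Posz 0)) | 4 => ((Posz 0), (Negz 0)) | _ => ((Posz 1), (Negz 0)) end.

Definition shift (u : node) (d : 'I_6) : node :=
  ((u.1 + (dirv d).1)%R, (u.2 + (dirv d).2)%R).

Definition opp (d : 'I_6) : 'I_6 := inord ((val d + 3) %% 6).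

(* walks of length k from u to v in the subgraph of G_Delta induced by P
   (u itself is not constrained; v and all later nodes satisfy P) *)
Fixpoint walk (P : node -> bool) (k : nat) (u v : node) : Prop :=
  match k with
  | 0 => u = v
  | k'.+1 => exists d : 'I_6, P (shift u d) /\ walk P k' (shift u d) v
  end.

Definition inX (X : {fset node}) : node -> bool := fun x => x \in X.
Definition outX (X : {fset node}) : node -> bool := fun x => x \notin X.

Definition connectedX (X : {fset node}) : Prop :=
  forall u v, u \in X -> v \in X -> exists k, walk (inX X) k u v.

Definition no_holes (X : {fset node}) : Prop :=
  forall a b, a \notin X -> b \notin X -> exists k, walk (outX X) k a b.

Definition is_dist (X : {fset node}) (u v : node) (k : nat) : Prop :=
  walk (inX X) k u v /\ forall k', walk (inX X) k' u v -> k <= k'.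

Fixpoint follow (par : node -> option node) (k : nat) (u : node) : option node :=
  match k with
  | 0 => Some u
  | k'.+1 => match par u with Some w => follow par k' w | None => None end
  end.

Definition IsSPF (X S : {fset node}) (par : node -> option node) : Prop :=
  (forall u, u \in X -> u \in S -> par u = None) /\
  (forall u, u \in X -> u \notin S ->
     exists d, par u = Some (shift u d) /\ shift u d \in X) /\
  (forall u, u \in X -> exists s k,
     [/\ s \in S, follow par k u = Some s, is_dist X u s k &
         forall s' k', s' \in S -> walk (inX X) k' u s' -> k <= k']).

Definition par_of (D : node -> option 'I_6) : node -> option node :=
  fun u => omap (shift u) (D u).

Record algo := Algo {
  st : finType;                      (* constant memory *)
  npins : nat;                       (* constant number of pins per edge *)
  (* initial state from local input: in S1, in S2, parent dir in forest 1,
     parent dir in forest 2, is leader, occupancy of the 6 neighbour positions *)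
  init : bool -> bool -> option 'I_6 -> option 'I_6 -> bool -> ('I_6 -> bool) -> st;
  (* partition of pins (direction, index) into partition sets, named by a
     representative pin; determined by the current state *)
  part : st -> 'I_6 * 'I_npins -> 'I_6 * 'I_npins;
  beep : st -> 'I_6 * 'I_npins -> bool;
  (* transition: current state, neighbour occupancy, beeps received on
     partition sets (of the previous partition) -> new state *)
  step : st -> ('I_6 -> bool) -> ('I_6 * 'I_npins -> bool) -> st;
  final : st -> bool;
  out : st -> option 'I_6             (* parent direction in the output forest *)
}.
Arguments init : clear implicits.
Arguments part : clear implicits.
Arguments beep : clear implicits.
Arguments step : clear implicits.
Arguments final : clear implicits.
Arguments out : clear implicits.

Section Semantics.
Variables (A : algo) (X : {fset node}).

Definition lab := ('I_6 * 'I_(npins A))%type.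

Definition occ (v : X) : 'I_6 -> bool := fun d => shift (val v) d \in X.

Definition link (q : X -> st A) : rel (X * lab) :=
  fun a b =>
    [exists d : 'I_6, [exists i : 'I_(npins A),
      [&& val b.1 == shift (val a.1) d,
          part A (q a.1) (d, i) == a.2 &
          part A (q b.1) (opp d, i) == b.2]]].

Definition same_circuit (q : X -> st A) : rel (X * lab) :=
  connect (fun a b => link q a b || link q b a).

Definition recv (q : X -> st A) (v : X) : lab -> bool :=
  fun l => [exists u : X, [exists l' : lab,
             beep A (q u) l' && same_circuit q (u, l') (v, l)]].

Definition round (q : X -> st A) : X -> st A :=
  fun v => step A (q v) (occ v) (recv q v).

Definition init_conf (S1 S2 : {fset node}) (ldr : node)
  (D1 D2 : node -> option 'I_6) : X -> st A :=
  fun v => init A (val v \in S1) (val v \in S2) (D1 (val v)) (D2 (val v))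
                  (val v == ldr) (occ v).

Definition run S1 S2 ldr D1 D2 (t : nat) : X -> st A :=
  iter t round (init_conf S1 S2 ldr D1 D2).

Definition out_dirs (q : X -> st A) : node -> option 'I_6 :=
  fun u => match insub u with Some v => out A (q v) | None => None end.

End Semantics.

Definition terminating (A : algo) : Prop :=
  forall s o r, final A s -> step A s o r = s.

Arguments occ : clear implicits.
Arguments link : clear implicits.
Arguments same_circuit : clear implicits.
Arguments recv : clear implicits.
Arguments round : clear implicits.
Arguments init_conf : clear implicits.
Arguments run : clear implicits.
Arguments out_dirs : clear implicits.

(* Let h_k(u) be the depth of u in the S_k-forest, i.e. its distance to S_k. The merged forest
   lets u follow its S_2-parent if h_2(u) < h_1(u) and its S_1-parent otherwise. The preference
   is inherited by the parent (along the chosen forest h drops by one, along any edge the other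
   h drops by at most one), so following it from u reaches a closest root of S_1 ∪ S_2 along a
   shortest path.
   The amoebots compare h_1(u) and h_2(u) bit by bit, least significant first, with the
   primary-and-secondary circuit technique: in iteration i each tree carries two tracks, the
   amoebots whose depth is a nonzero multiple of 2^i swap them on the edge to their parent, and
   the roots beep on the primary track, so u hears that beep on its own primary track exactly
   when bit i of its depth is 0. A global circuit detects the first iteration in which no
   amoebot swaps; this happens after at most log n + 1 iterations, and by then every depth is
   below 2^i, so comparing the low i bits compares the depths. *)

From mathcomp Require Import all_boot all_order all_algebra.
From mathcomp Require Import finmap zify.
(* Imported last, so that [opp] is the grid direction of Defs, not the one of fraction. *)
From Pilot Require Import Defs.
Set Implicit Arguments. Unset Strict Implicit. Unset Printing Implicit Defensive.
Import GRing.Theory.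

Lemma opp_val (d : 'I_6) : nat_of_ord (opp d) = (d + 3) %% 6.
Proof. by rewrite inordK // ltn_pmod. Qed.

Lemma oppK : involutive opp.
Proof. by move=> d; apply: ord_inj; rewrite !opp_val; case: d => [[|[|[|[|[|[|]]]]]]]. Qed.

Lemma dirv_opp (d : 'I_6) : dirv (opp d) = (- (dirv d).1, - (dirv d).2)%R.
Proof. by rewrite /dirv /= opp_val; case: d => [[|[|[|[|[|[|]]]]]]]. Qed.

Lemma shiftK (d : 'I_6) : cancel (shift^~ d) (shift^~ (opp d)).
Proof. by case=> a b; rewrite /shift dirv_opp /= !addrK. Qed.

Lemma follow_addn (par : node -> option node) j m u :
  follow par (j + m) u = if follow par j u is Some w then follow par m w else None.
Proof. by elim: j u => [|j IH] u //=; case: (par u). Qed.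

Lemma follow_eq_on (P : pred node) (f g : node -> option 'I_6) :
  (forall v e, P v -> g v = Some e -> P (shift v e)) -> {in P, f =1 g} ->
  forall k v, P v -> follow (par_of f) k v = follow (par_of g) k v.
Proof.
move=> closedP eq_fg; elim=> [|k IH] v Pv //=.
rewrite /par_of eq_fg //; case ge: (g v) => [e|] //=.
exact/IH/(closedP v).
Qed.

Section Depth.
Variables (X S : {fset node}) (D : node -> option 'I_6).
Hypotheses (subSX : (S `<=` X)%fset) (spfD : IsSPF X S (par_of D)).

Lemma spf_rootE u : u \in X -> (D u == None) = (u \in S).
Proof.
case: spfD => [rootS [parS _]] uX; case: (boolP (u \in S)) => uS.
  by rewrite /par_of in rootS; move: (rootS u uX uS); case: (D u).
by case: (parS u uX uS) => d []; rewrite /par_of; case: (D u).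
Qed.

Lemma spf_parent_in u e : u \in X -> D u = Some e -> shift u e \in X.
Proof.
case: spfD => [_ [parS _]] uX De.
have uS : u \notin S by rewrite -spf_rootE // De.
by case: (parS u uX uS) => d []; rewrite /par_of De => /Some_inj ->.
Qed.

Definition reaches_root (k : nat) (u : node) : bool :=
  if follow (par_of D) k u is Some s then s \in S else false.

Lemma reaches_rootS k u e : D u = Some e ->
  reaches_root k.+1 u = reaches_root k (shift u e).
Proof. by rewrite /reaches_root /= /par_of => ->. Qed.

Lemma reaches_root_uniq u j j' : reaches_root j u -> reaches_root j' u -> j = j'.
Proof.
wlog lt_jj' : j j' / j < j'.
  by move=> wlog rj rj'; case: (ltngtP j j') => [/wlog|/wlog|] // ->.
have -> : j' = j + (j' - j.+1).+1 by lia.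
rewrite /reaches_root follow_addn; case: (follow _ j u) => // s sS.
have /eqP Ds : D s == None by rewrite spf_rootE // (fsubsetP subSX).
by rewrite /= /par_of Ds.
Qed.

Definition parent u := if D u is Some e then shift u e else u.

Lemma reaches_root_parent k u : u \in X -> reaches_root k.+1 u ->
  parent u \in X /\ reaches_root k (parent u).
Proof.
move=> uX; rewrite /parent; case De: (D u) => [e|].
  by rewrite (reaches_rootS _ De) (spf_parent_in uX De).
by rewrite /reaches_root /= /par_of De.
Qed.

Lemma reaches_root_iter m k u : u \in X -> reaches_root (m + k) u ->
  iter m parent u \in X /\ reaches_root k (iter m parent u).
Proof.
move=> uX; elim: m k => [|m IH] k //.
rewrite addSn -addnS => /IH [vX rv]; rewrite iterS.
exact: reaches_root_parent.
Qed.

Lemma reaches_root_lt_card k u : u \in X -> reaches_root k u -> k < #|` X|.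
Proof.
move=> uX rk.
have iterP m : m <= k -> iter m parent u \in X /\ reaches_root (k - m) (iter m parent u).
  by move=> le_mk; apply: reaches_root_iter; rewrite ?subnKC.
have uniq_iter : uniq [seq iter m parent u | m <- iota 0 k.+1].
  rewrite map_inj_in_uniq ?iota_uniq // => a b.
  rewrite !mem_iota /= !add0n !ltnS => le_ak le_bk eq_ab.
  have [_ ra] := iterP a le_ak; have [_ rb] := iterP b le_bk.
  rewrite eq_ab in ra; have := reaches_root_uniq ra rb; lia.
rewrite -[k.+1](size_iota 0) -(size_map (fun m => iter m parent u)).
apply: uniq_leq_size uniq_iter _ => x /mapP [m].
by rewrite mem_iota /= add0n ltnS => /iterP [? _] ->.
Qed.

Definition depth u := find (reaches_root^~ u) (iota 0 #|` X|).

Lemma depth_reaches u : u \in X -> reaches_root (depth u) u.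
Proof.
move=> uX; case: spfD => [_ [_ closest]]; have [s [k [sS fk _ _]]] := closest u uX.
have rk : reaches_root k u by rewrite /reaches_root fk.
have has_k : has (reaches_root^~ u) (iota 0 #|` X|).
  by apply/hasP; exists k; rewrite // mem_iota /= add0n (reaches_root_lt_card uX rk).
by have := nth_find 0 has_k; rewrite nth_iota ?add0n // -[X in _ < X](size_iota 0) -has_find.
Qed.

Lemma depth_eq u k : u \in X -> reaches_root k u -> depth u = k.
Proof. by move=> uX; apply: reaches_root_uniq; apply: depth_reaches. Qed.

Lemma depth_root u : u \in X -> D u = None -> depth u = 0.
Proof. by move=> uX Du; apply: depth_eq; rewrite // /reaches_root /= -spf_rootE ?Du. Qed.

Lemma depth_parent u e : u \in X -> D u = Some e -> depth u = (depth (shift u e)).+1.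
Proof.
move=> uX De; apply: depth_eq; rewrite // (reaches_rootS _ De).
exact/depth_reaches/(spf_parent_in uX De).
Qed.

Lemma depth_gt0 u : u \in X -> (0 < depth u) = (D u != None).
Proof.
by move=> uX; case De: (D u) => [e|]; rewrite ?(depth_parent uX De) ?(depth_root uX De).
Qed.

Lemma parent_not_child u e : u \in X -> D u = Some e -> D (shift u e) != Some (opp e).
Proof.
move=> uX De; apply/eqP => Dw; have := depth_parent uX De.
by rewrite (depth_parent (spf_parent_in uX De) Dw) shiftK; lia.
Qed.

Lemma depth_spec u : u \in X -> exists s,
  [/\ s \in S, follow (par_of D) (depth u) u = Some s, is_dist X u s (depth u) &
      forall s' k', s' \in S -> walk (inX X) k' u s' -> depth u <= k'].
Proof.
case: spfD => [_ [_ closest]] uX; have [s [k [sS fk dk mk]]] := closest u uX.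
by rewrite (@depth_eq u k) ?/reaches_root ?fk //; exists s.
Qed.

Lemma depth_neighbor u d : u \in X -> shift u d \in X -> depth u <= (depth (shift u d)).+1.
Proof.
move=> uX wX; have [s [sS _ [walk_ws _] _]] := depth_spec wX.
have [_ [_ _ _ closest]] := depth_spec uX.
by apply: (closest s); last by exists d.
Qed.

Lemma depth_ancestor u m : u \in X -> m <= depth u -> exists2 v, v \in X & depth v = m.
Proof.
move=> uX le_m; have [|vX rv] := @reaches_root_iter (depth u - m) m u uX.
  by rewrite subnK // depth_reaches.
by exists (iter (depth u - m) parent u); last exact: depth_eq.
Qed.

Lemma depth_lt_card u : u \in X -> depth u < #|` X|.
Proof. by move=> uX; apply/reaches_root_lt_card/depth_reaches. Qed.

End Depth.

Section Union.
Variables (X Sa Sb : {fset node}) (Da Db : node -> option 'I_6).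
Hypotheses (subA : (Sa `<=` X)%fset) (subB : (Sb `<=` X)%fset)
  (spfA : IsSPF X Sa (par_of Da)) (spfB : IsSPF X Sb (par_of Db)).

Lemma depth_along_parent v e : v \in X -> Da v = Some e ->
  depth X Sa Da v = (depth X Sa Da (shift v e)).+1 /\
  depth X Sb Db v <= (depth X Sb Db (shift v e)).+1.
Proof.
move=> vX De; split; first exact: depth_parent.
exact/(depth_neighbor subB spfB vX)/(spf_parent_in spfA vX De).
Qed.

Lemma spf_union_closest (f : node -> option 'I_6) (P : pred node) u :
  (forall v e, v \in X -> P v -> Da v = Some e -> P (shift v e)) ->
  (forall v, v \in X -> P v -> f v = Da v) ->
  depth X Sa Da u <= depth X Sb Db u -> u \in X -> P u ->
  exists s k, [/\ s \in (Sa `|` Sb)%fset, follow (par_of f) k u = Some s, is_dist X u s k &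
    forall s' k', s' \in (Sa `|` Sb)%fset -> walk (inX X) k' u s' -> k <= k'].
Proof.
move=> closedP eq_f le_ab uX Pu.
have [s [sS follow_s dist_s min_s]] := depth_spec subA spfA uX.
exists s, (depth X Sa Da u); split=> //; first by rewrite in_fsetU sS.
- rewrite -follow_s; apply: (@follow_eq_on [pred v | (v \in X) && P v]); rewrite /= ?uX //.
    move=> v e /andP [vX Pv] De; rewrite (spf_parent_in spfA vX De).
    exact: closedP De.
  by move=> v /andP [vX Pv]; apply: eq_f.
- move=> s' k' /fsetUP [s'A | s'B] walk_s'; first exact: min_s walk_s'.
  have [_ [_ _ _ min_B]] := depth_spec subB spfB uX.
  by have := min_B _ _ s'B walk_s'; lia.
Qed.

End Union.

Section Merge.
Variables (X S1 S2 : {fset node}) (D1 D2 : node -> option 'I_6).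
Hypotheses (sub1 : (S1 `<=` X)%fset) (sub2 : (S2 `<=` X)%fset)
  (spf1 : IsSPF X S1 (par_of D1)) (spf2 : IsSPF X S2 (par_of D2)).

Definition merged_dir u := if depth X S2 D2 u < depth X S1 D1 u then D2 u else D1 u.

Lemma merged_spf (f : node -> option 'I_6) :
  {in X, f =1 merged_dir} -> IsSPF X (S1 `|` S2)%fset (par_of f).
Proof.
rewrite /merged_dir => eq_f; split; [|split].
- move=> u uX /fsetUP uS; rewrite /par_of eq_f //.
  case: uS => uS.
    have /eqP D1u : D1 u == None by rewrite (spf_rootE spf1).
    by rewrite (depth_root sub1 spf1 uX D1u) ltn0 D1u.
  have /eqP D2u : D2 u == None by rewrite (spf_rootE spf2).
  by rewrite (depth_root sub2 spf2 uX D2u) (depth_gt0 sub1 spf1 uX) D2u; case: (D1 u).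
- move=> u uX; rewrite in_fsetU negb_or => /andP [uS1 uS2]; rewrite /par_of eq_f //.
  case D1u: (D1 u) => [e1|]; last by move: uS1; rewrite -(spf_rootE spf1) // D1u.
  case D2u: (D2 u) => [e2|]; last by move: uS2; rewrite -(spf_rootE spf2) // D2u.
  case: ifP => _.
    by exists e2; rewrite (spf_parent_in spf2 uX D2u).
  by exists e1; rewrite (spf_parent_in spf1 uX D1u).
- move=> u uX; case: (ltnP (depth X S2 D2 u) (depth X S1 D1 u)) => cmp.
    rewrite fsetUC; apply: (spf_union_closest sub2 sub1 spf2 spf1
      (P := fun v => depth X S2 D2 v < depth X S1 D1 v)) => //; last exact: ltnW.
      move=> v e vX lt_v /(depth_along_parent sub2 sub1 spf2 spf1 vX) [] /=; lia.
    by move=> v vX lt_v; rewrite eq_f // lt_v.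
  apply: (spf_union_closest sub1 sub2 spf1 spf2
    (P := fun v => depth X S1 D1 v <= depth X S2 D2 v)) => //.
    move=> v e vX le_v /(depth_along_parent sub1 sub2 spf1 spf2 vX) [] /=; lia.
  by move=> v vX le_v; rewrite eq_f // ltnNge le_v.
Qed.

End Merge.

Section Circuits.
Variables (A : algo) (X : {fset node}) (q : X -> st A).

Lemma linkP a b : reflect (exists d i, [/\ val b.1 = shift (val a.1) d,
    part A (q a.1) (d, i) = a.2 & part A (q b.1) (opp d, i) = b.2])
  (link A X q a b).
Proof.
apply: (iffP existsP) => [[d /existsP [i /and3P [/eqP ? /eqP ? /eqP ?]]]|[d [i [-> <- <-]]]].
  by exists d, i.
by exists d; apply/existsP; exists i; rewrite !eqxx.
Qed.

Lemma same_circuit_link a b : link A X q a b -> same_circuit A X q a b.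
Proof. by move=> ab; apply: connect1; rewrite /= ab. Qed.

Lemma same_circuit_inv (K : eqType) (V : X * lab A -> K) :
  (forall (u w : X) d i, val w = shift (val u) d ->
     V (u, part A (q u) (d, i)) = V (w, part A (q w) (opp d, i))) ->
  forall a b, same_circuit A X q a b -> V a = V b.
Proof.
move=> V_link a b ab.
have closedV : closed (fun x y => link A X q x y || link A X q y x) [pred c | V c == V a].
  move=> [x1 x2] [y1 y2] /orP [] /linkP [d [i [/= xy <- <-]]];
  by rewrite !inE (V_link _ _ _ _ xy).
by have := closed_connect closedV ab; rewrite !inE eqxx => /esym/eqP.
Qed.

Lemma recvP v l : reflect (exists u l', beep A (q u) l' /\ same_circuit A X q (u, l') (v, l))
  (recv A X q v l).
Proof.
apply: (iffP existsP) => [[u /existsP [l' /andP [? ?]]]|[u [l' [bu uv]]]].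
  by exists u, l'.
by exists u; apply/existsP; exists l'; rewrite bu.
Qed.

Definition facing (a b : X * lab A) : bool :=
  (val b.1 == shift (val a.1) a.2.1) && (b.2 == (opp a.2.1, a.2.2)).

Lemma facing_sym a b : facing a b -> facing b a.
Proof.
case: a b => [u [d i]] [w [e j]]; rewrite /facing /= => /andP [/eqP -> /eqP [-> ->]].
by rewrite shiftK oppK !eqxx.
Qed.

Lemma facing_fun a b c : facing a b -> facing a c -> b = c.
Proof.
case: a b c => [u [d i]] [w [e j]] [x [e' j']]; rewrite /facing /=.
move=> /andP [/eqP wE /eqP [-> ->]] /andP [/eqP xE /eqP [-> ->]].
by congr (_, _); apply: val_inj; rewrite /= wE xE.
Qed.

Lemma facing_closed a x y : facing x y -> (x == a) || facing a x -> (y == a) || facing a y.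
Proof.
move=> xy /orP [/eqP xa | ax]; first by rewrite -xa xy orbT.
by rewrite (facing_fun (facing_sym ax) xy) eqxx.
Qed.

Hypothesis part_id : forall u p, part A (q u) p = p.

Lemma link_facing a b : link A X q a b -> facing a b.
Proof.
case: a b => [u l] [w l'] /linkP [d [i [/= wE]]].
by rewrite !part_id => <- <-; rewrite /facing /= wE !eqxx.
Qed.

Lemma same_circuit_facing a b : same_circuit A X q a b -> b = a \/ facing a b.
Proof.
move=> ab; pose P := [pred c | (c == a) || facing a c].
suff : b \in P by rewrite inE => /orP [/eqP|]; [left|right].
rewrite -(closed_connect _ ab) ?inE ?eqxx // => x y /orP [] /link_facing xy;
  apply/idP/idP; apply: facing_closed => //; exact: facing_sym.
Qed.

End Circuits.

Lemma modn_exp2S x i : x %% 2 ^ i.+1 = odd (x %/ 2 ^ i) * 2 ^ i + x %% 2 ^ i.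
Proof.
have lt_mod : x %% 2 ^ i < 2 ^ i by rewrite ltn_pmod ?expn_gt0.
rewrite {1}(divn_eq x (2 ^ i)) {1}(divn_eq (x %/ 2 ^ i) 2) modn2 expnSr.
rewrite mulnDl -mulnA (mulnC 2) -addnA modnMDl modn_small //.
by case: (odd _); lia.
Qed.

Lemma ltn_modn_exp2S x y i : (y %% 2 ^ i.+1 < x %% 2 ^ i.+1) =
  if odd (x %/ 2 ^ i) != odd (y %/ 2 ^ i) then odd (x %/ 2 ^ i)
  else y %% 2 ^ i < x %% 2 ^ i.
Proof.
have ltx : x %% 2 ^ i < 2 ^ i by rewrite ltn_pmod ?expn_gt0.
have lty : y %% 2 ^ i < 2 ^ i by rewrite ltn_pmod ?expn_gt0.
rewrite !modn_exp2S; case: (odd (x %/ _)); case: (odd (y %/ _)) => /=;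
  rewrite ?mul0n ?mul1n ?ltn_add2l //; lia.
Qed.

Lemma dvdn_exp2S h i : (2 ^ i %| h) && ~~ odd (h %/ 2 ^ i) = (2 ^ i.+1 %| h).
Proof.
have [/dvdnP [m ->]|ndvd] /= := boolP (2 ^ i %| h).
  by rewrite mulnK ?expn_gt0 // expnSr (mulnC m) dvdn_pmul2l ?expn_gt0 // dvdn2.
by apply/esym/negbTE; apply: contra ndvd; apply: dvdn_trans; rewrite expnS dvdn_mull.
Qed.

(* Forest [false] is the S_1-forest, [true] the S_2-forest. A state records whether the setup
   round is pending, whether the amoebot has halted, its parent and children directions and
   whether it currently swaps tracks ([active]) in both forests, and whether the low bits
   compared so far prefer forest 2. *)
Definition mstate := ((((bool * bool) * (option 'I_6 * option 'I_6)) *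
  ({ffun 'I_6 -> bool} * {ffun 'I_6 -> bool})) * ((bool * bool) * bool))%type.

Definition mk_state (setup halt : bool) (p1 p2 : option 'I_6) (c1 c2 : {ffun 'I_6 -> bool})
  (a1 a2 pref2 : bool) : mstate := ((((setup, halt), (p1, p2)), (c1, c2)), ((a1, a2), pref2)).

Definition in_setup (s : mstate) := s.1.1.1.1.
Definition halted (s : mstate) := s.1.1.1.2.
Definition pdir (k : bool) (s : mstate) := if k then s.1.1.2.2 else s.1.1.2.1.
Definition kids (k : bool) (s : mstate) := if k then s.1.2.2 else s.1.2.1.
Definition active (k : bool) (s : mstate) := if k then s.2.1.2 else s.2.1.1.
Definition prefer2 (s : mstate) := s.2.2.
Arguments pdir : simpl never.
Arguments active : simpl never.

Section StateFields.
Variables (setup halt : bool) (p1 p2 : option 'I_6) (c1 c2 : {ffun 'I_6 -> bool}).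
Variables (a1 a2 pref2 : bool).
Local Notation s := (mk_state setup halt p1 p2 c1 c2 a1 a2 pref2).

Lemma pdir_mk k : pdir k s = if k then p2 else p1. Proof. by case: k. Qed.
Lemma active_mk k : active k s = if k then a2 else a1. Proof. by case: k. Qed.
Lemma prefer2_mk : prefer2 s = pref2. Proof. by []. Qed.

End StateFields.

(* Pins of an edge: [track_pin k c] (0-3) carries track [c] of forest [k], pin 4 the global
   circuit, [setup_pin k] (5, 6) the beep to the parent in forest [k] in the setup round.
   Partition sets are named by labels of direction 0: [track_set k c] (7-10) joins track [c] of
   the children edges with track [c (+) active] of the parent edge, [global_set] (11) joins all
   global pins, and [(d, ord0)] collects the pins without a role. *)
Definition track_pin (k c : bool) : 'I_12 := inord ((if k then 2 else 0) + c).
Definition setup_pin (k : bool) : 'I_12 := inord (if k then 6 else 5).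
Definition track_set (k c : bool) : 'I_6 * 'I_12 := (ord0, inord ((if k then 9 else 7) + c)).
Definition global_set : 'I_6 * 'I_12 := (ord0, inord 11).

Lemma track_pin_val k c : nat_of_ord (track_pin k c) = (if k then 2 else 0) + c.
Proof. by rewrite inordK //; case: k; case: c. Qed.

Lemma track_pin_lt4 k c : track_pin k c < 4.
Proof. by rewrite track_pin_val; case: k; case: c. Qed.

Lemma track_pin_gt1 k c : (1 < track_pin k c) = k.
Proof. by rewrite track_pin_val; case: k; case: c. Qed.

Lemma odd_track_pin k c : odd (track_pin k c) = c.
Proof. by rewrite track_pin_val; case: k; case: c. Qed.

Lemma setup_pin_inj : injective setup_pin.
Proof. by do 2!case=> //; move/(congr1 val); rewrite /= !inordK. Qed.

Definition mpart (s : mstate) (p : 'I_6 * 'I_12) : 'I_6 * 'I_12 :=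
  if in_setup s then p
  else if val p.2 == 4 then global_set
  else if val p.2 < 4 then
    if pdir (1 < p.2) s == Some p.1 then track_set (1 < p.2) (odd p.2 (+) active (1 < p.2) s)
    else if kids (1 < p.2) s p.1 then track_set (1 < p.2) (odd p.2) else (p.1, ord0)
  else (p.1, ord0).

Definition mbeep (s : mstate) (l : 'I_6 * 'I_12) : bool :=
  if halted s then false
  else if in_setup s then
    (pdir false s == Some l.1) && (l.2 == setup_pin false) ||
    (pdir true s == Some l.1) && (l.2 == setup_pin true)
  else [|| (pdir false s == None) && (l == track_set false false),
           (pdir true s == None) && (l == track_set true false)
         | (active false s || active true s) && (l == global_set)].

Definition mstep (s : mstate) (o : 'I_6 -> bool) (r : 'I_6 * 'I_12 -> bool) : mstate :=
  if halted s then s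
  else if in_setup s then
    mk_state false false (pdir false s) (pdir true s)
       [ffun d => r (d, setup_pin false) && (pdir false s != Some d)]
       [ffun d => r (d, setup_pin true) && (pdir true s != Some d)]
       (active false s) (active true s) (prefer2 s)
  else if r global_set then
    mk_state false false (pdir false s) (pdir true s) (kids false s) (kids true s)
       (active false s && r (track_set false false)) (active true s && r (track_set true false))
       (if r (track_set false false) != r (track_set true false)
        then ~~ r (track_set false false) else prefer2 s)
  else mk_state false true (pdir false s) (pdir true s) (kids false s) (kids true s)
       (active false s) (active true s) (prefer2 s).

Definition minit (in1 in2 : bool) (p1 p2 : option 'I_6) (leader : bool) (o : 'I_6 -> bool) :=
  mk_state true false p1 p2 [ffun=> false] [ffun=> false] (p1 != None) (p2 != None) false.

Definition mout (s : mstate) : option 'I_6 := if prefer2 s then pdir true s else pdir false s.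

Definition merging_algo : algo := @Algo mstate 12 minit mpart mbeep mstep halted mout.

Lemma merging_algo_terminating : terminating merging_algo.
Proof. by move=> s o r /= halt_s; rewrite /mstep halt_s. Qed.

Section Run.
Variables (X S1 S2 : {fset node}) (D1 D2 : node -> option 'I_6).
Hypotheses (sub1 : (S1 `<=` X)%fset) (sub2 : (S2 `<=` X)%fset)
  (spf1 : IsSPF X S1 (par_of D1)) (spf2 : IsSPF X S2 (par_of D2)).
Hypothesis connX : connectedX X.

Definition roots_of (k : bool) := if k then S2 else S1.
Definition pdir_of (k : bool) := if k then D2 else D1.
Local Notation depth_of k := (depth X (roots_of k) (pdir_of k)).

Lemma roots_sub k : (roots_of k `<=` X)%fset.
Proof. by case: k. Qed.

Lemma forest_spf k : IsSPF X (roots_of k) (par_of (pdir_of k)).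
Proof. by case: k. Qed.

Definition is_child k v d :=
  (shift v d \in X) && (pdir_of k (shift v d) == Some (opp d)) && (pdir_of k v != Some d).
Definition active_at i k v := (pdir_of k v != None) && (2 ^ i %| depth_of k v).
Definition depth_bit i k v := odd (depth_of k v %/ 2 ^ i).

Lemma depth_bit_parent i k u e : u \in X -> pdir_of k u = Some e ->
  depth_bit i k u = active_at i k u (+) depth_bit i k (shift u e).
Proof.
move=> uX De; rewrite /depth_bit /active_at (depth_parent (roots_sub k) (forest_spf k) uX De).
by rewrite divnS ?expn_gt0 // oddD oddb De.
Qed.

Lemma depth_bit_root i k u : u \in X -> pdir_of k u = None -> depth_bit i k u = false.
Proof.
by move=> uX De; rewrite /depth_bit (depth_root (roots_sub k) (forest_spf k) uX De) div0n.
Qed.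

Definition pasc_inv i (q : X -> mstate) := forall v : X,
  [/\ in_setup (q v) = false /\ halted (q v) = false,
      forall k, pdir k (q v) = pdir_of k (val v),
      forall k, kids k (q v) = [ffun d => is_child k (val v) d],
      forall k, active k (q v) = active_at i k (val v) &
      prefer2 (q v) = (depth_of true (val v) %% 2 ^ i < depth_of false (val v) %% 2 ^ i)].

Definition some_active i := [exists u : X, active_at i false (val u) || active_at i true (val u)].

Section Iteration.
Variables (i : nat) (q : X -> mstate).
Hypothesis inv : pasc_inv i q.

(* [Some (Some (k, b))]: the primary ([b = false]) or secondary track circuit of forest [k];
   only the primary ones carry the beeps of the roots. [Some None]: the global circuit. *)
Definition circuit_label (x : X * lab merging_algo) : option (option (bool * bool)) :=
  if x.2.1 != ord0 then None else
  match nat_of_ord x.2.2 with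
  | 7 => Some (Some (false, depth_bit i false (val x.1)))
  | 8 => Some (Some (false, ~~ depth_bit i false (val x.1)))
  | 9 => Some (Some (true, depth_bit i true (val x.1)))
  | 10 => Some (Some (true, ~~ depth_bit i true (val x.1)))
  | 11 => Some None
  | _ => None end.

Lemma circuit_label_track (x : X) k c :
  circuit_label (x, track_set k c) = Some (Some (k, depth_bit i k (val x) (+) c)).
Proof.
rewrite /circuit_label /= inordK; last by case: k; case: c.
by case: k; case: c; rewrite /= ?addbT ?addbF.
Qed.

Lemma circuit_label_global (x : X) : circuit_label (x, global_set) = Some None.
Proof. by rewrite /circuit_label /= inordK. Qed.

Lemma circuit_label_unused (x : X) d : circuit_label (x, (d, ord0)) = None.
Proof. by rewrite /circuit_label /=; case: (d != ord0). Qed.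

Definition edge_label k (u : node) d (c : bool) : option (option (bool * bool)) :=
  if pdir_of k u == Some d then Some (Some (k, depth_bit i k u (+) (c (+) active_at i k u)))
  else if is_child k u d then Some (Some (k, depth_bit i k u (+) c)) else None.

Lemma mpart_track (u : X) d (p : 'I_12) : p < 4 ->
  mpart (q u) (d, p) =
  if pdir_of (1 < p) (val u) == Some d
  then track_set (1 < p) (odd p (+) active_at i (1 < p) (val u))
  else if is_child (1 < p) (val u) d then track_set (1 < p) (odd p) else (d, ord0).
Proof.
move=> p_lt4; have [[setup_u _] pdirE kidsE activeE _] := inv u.
by rewrite /mpart setup_u /= p_lt4 pdirE kidsE activeE ffunE (ltn_eqF p_lt4).
Qed.

Lemma mpart_other (u : X) d (p : 'I_12) : 4 <= p ->
  mpart (q u) (d, p) = if val p == 4 then global_set else (d, ord0).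
Proof.
by move=> p_ge4; have [[setup_u _] _ _ _ _] := inv u; rewrite /mpart setup_u /= ltnNge p_ge4.
Qed.

Lemma circuit_label_mpart (u : X) d (p : 'I_12) : p < 4 ->
  circuit_label (u, mpart (q u) (d, p)) = edge_label (1 < p) (val u) d (odd p).
Proof.
move=> p_lt4; rewrite mpart_track // /edge_label.
by case: ifP => _; [|case: ifP => _]; rewrite ?circuit_label_track ?circuit_label_unused.
Qed.

Lemma edge_label_parent k (u : node) e c : u \in X -> pdir_of k u = Some e ->
  edge_label k u e c = edge_label k (shift u e) (opp e) c.
Proof.
move=> uX De; have not_child := parent_not_child (roots_sub k) (forest_spf k) uX De.
rewrite /edge_label De eqxx (negbTE not_child) /is_child shiftK uX oppK De eqxx /=.
rewrite not_child (depth_bit_parent i uX De).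
by case: (active_at i k u); case: c; case: (depth_bit i k (shift u e)).
Qed.

Lemma edge_label_sym k (u : node) d c : u \in X -> shift u d \in X ->
  edge_label k u d c = edge_label k (shift u d) (opp d) c.
Proof.
move=> uX wX; case Dd: (pdir_of k u == Some d); first exact/edge_label_parent/eqP.
case Dw: (pdir_of k (shift u d) == Some (opp d)).
  by rewrite (edge_label_parent c wX (eqP Dw)) shiftK oppK.
by rewrite /edge_label Dd Dw /is_child Dw shiftK oppK Dd /= !andbF.
Qed.

Lemma circuit_label_link (u w : X) d p : val w = shift (val u) d ->
  circuit_label (u, mpart (q u) (d, p)) = circuit_label (w, mpart (q w) (opp d, p)).
Proof.
move=> wE; case: (ltnP p 4) => p_lt4.
  by rewrite !circuit_label_mpart // wE; apply: edge_label_sym; rewrite -?wE; apply: valP.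
by rewrite !mpart_other //; case: ifP; rewrite ?circuit_label_global ?circuit_label_unused.
Qed.

Lemma same_circuit_label a b :
  same_circuit merging_algo X q a b -> circuit_label a = circuit_label b.
Proof. by apply: same_circuit_inv => u w d p; apply: circuit_label_link. Qed.

Lemma mbeep_pasc (u : X) l : mbeep (q u) l =
  [|| (pdir_of false (val u) == None) && (l == track_set false false),
      (pdir_of true (val u) == None) && (l == track_set true false)
    | (active_at i false (val u) || active_at i true (val u)) && (l == global_set)].
Proof.
have [[setup_u halt_u] pdirE _ activeE _] := inv u.
by rewrite /mbeep halt_u setup_u !pdirE !activeE.
Qed.

Lemma root_track_circuit k (v : X) : exists2 r : X, pdir_of k (val r) = None &
  same_circuit merging_algo X q (r, track_set k false) (v, track_set k (depth_bit i k (val v))).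
Proof.
move: {2}(depth_of k (val v)) (erefl (depth_of k (val v))) => j.
elim: j v => [|j IH] v depth_v; have vX := valP v.
  have Dv : pdir_of k (val v) = None.
    apply/eqP; move: (depth_gt0 (roots_sub k) (forest_spf k) vX).
    by rewrite depth_v => /esym/negbFE.
  by exists v; rewrite // depth_bit_root //; apply: connect0.
case De: (pdir_of k (val v)) => [e|].
  rewrite (depth_parent (roots_sub k) (forest_spf k) vX De) in depth_v.
  have pX := spf_parent_in (forest_spf k) vX De; pose p : X := [` pX]%fset.
  have [r Dr rp] := IH p (succn_inj depth_v).
  exists r => //; apply: connect_trans rp (same_circuit_link _).
  have not_child := parent_not_child (roots_sub k) (forest_spf k) vX De.
  apply/linkP; exists (opp e), (track_pin k (depth_bit i k (val p))); split.
  - by rewrite /= shiftK.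
  - rewrite /= mpart_track ?track_pin_lt4 // track_pin_gt1 odd_track_pin (negbTE not_child).
    by rewrite /is_child /= shiftK vX oppK De eqxx not_child.
  - rewrite /= oppK mpart_track ?track_pin_lt4 // track_pin_gt1 odd_track_pin De eqxx.
    by rewrite (depth_bit_parent i vX De) addbC.
by rewrite (depth_root (roots_sub k) (forest_spf k) vX De) in depth_v.
Qed.

Lemma recv_track k (v : X) :
  recv merging_algo X q v (track_set k false) = ~~ depth_bit i k (val v).
Proof.
apply/recvP/idP => [[u [l [beep_u uv]]]|bit_v].
  move: beep_u (same_circuit_label uv); rewrite /= mbeep_pasc !circuit_label_track addbF.
  case/or3P => /andP [Du /eqP ->]; rewrite ?circuit_label_global //;
  by rewrite circuit_label_track depth_bit_root ?(valP u) ?(eqP Du) // => -[_ <-].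
have [r Dr rv] := root_track_circuit k v; exists r, (track_set k false); split.
  by rewrite /= mbeep_pasc; case: k {rv bit_v} Dr => /= ->; rewrite !eqxx ?orbT.
by rewrite (negbTE bit_v) in rv.
Qed.

Lemma global_circuit (u v : X) :
  same_circuit merging_algo X q (u, global_set) (v, global_set).
Proof.
have [n walk_uv] := connX (valP u) (valP v).
elim: n u walk_uv => [|n IH] u /= walk_uv.
  by rewrite (val_inj walk_uv); apply: connect0.
case: walk_uv => d [wX walk_wv].
apply: connect_trans (IH [` wX]%fset walk_wv); apply/same_circuit_link/linkP.
by exists d, (inord 4); rewrite /= !mpart_other /= ?inordK.
Qed.

Lemma recv_global (v : X) : recv merging_algo X q v global_set = some_active i.
Proof.
apply/recvP/existsP => [[u [l [beep_u uv]]]|[u act_u]].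
  exists u; move: beep_u (same_circuit_label uv); rewrite /= mbeep_pasc circuit_label_global.
  by case/or3P => /andP [act_u /eqP ->]; rewrite ?circuit_label_track.
exists u, global_set; split; last exact: global_circuit.
by rewrite /= mbeep_pasc act_u eqxx !orbT.
Qed.

End Iteration.

Lemma pasc_round_inv i q : pasc_inv i q -> some_active i ->
  pasc_inv i.+1 (round merging_algo X q).
Proof.
move=> inv act v; have [[setup_v halt_v] pdirE kidsE activeE prefE] := inv v.
rewrite /round /= /mstep halt_v setup_v (recv_global inv) act !(recv_track inv).
split=> //.
- by case; rewrite active_mk activeE /active_at -andbA dvdn_exp2S.
- by rewrite prefer2_mk ltn_modn_exp2S prefE /depth_bit; case: odd; case: odd.
Qed.

Lemma halting_round i q : pasc_inv i q -> ~~ some_active i -> forall v : X,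
  halted (round merging_algo X q v) /\
  mout (round merging_algo X q v) =
    if depth_of true (val v) %% 2 ^ i < depth_of false (val v) %% 2 ^ i
    then D2 (val v) else D1 (val v).
Proof.
move=> inv inactive v; have [[setup_v halt_v] pdirE _ _ prefE] := inv v.
rewrite /round /= /mstep halt_v setup_v (recv_global inv) (negbTE inactive).
by rewrite /mout prefer2_mk !pdir_mk prefE !pdirE.
Qed.

Section Setup.
Variable ldr : node.
Local Notation q0 := (init_conf merging_algo X S1 S2 ldr D1 D2).

Lemma beep_setup k (u : X) e :
  beep merging_algo (q0 u) (e, setup_pin k) = (pdir_of k (val u) == Some e).
Proof.
by case: k; rewrite /= /mbeep /= !pdir_mk !(inj_eq setup_pin_inj) /= ?andbT ?andbF ?orbF.
Qed.

Lemma recv_setup k (v : X) d : recv merging_algo X q0 v (d, setup_pin k) =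
  (pdir_of k (val v) == Some d) ||
  (shift (val v) d \in X) && (pdir_of k (shift (val v) d) == Some (opp d)).
Proof.
have part_id u p : part merging_algo (q0 u) p = p by [].
apply/recvP/idP => [[u [[e p] [beep_u uv]]]|].
  case: (same_circuit_facing part_id uv) => [[vu de pk]|].
    by subst; rewrite beep_setup in beep_u; rewrite beep_u.
  rewrite /facing /= => /andP [/eqP vE /eqP [dE pk]].
  by rewrite -pk beep_setup in beep_u; rewrite vE dE shiftK (valP u) oppK beep_u orbT.
case/orP => [Dd | /andP [wX Dw]].
  by exists v, (d, setup_pin k); rewrite beep_setup Dd; split; last apply: connect0.
exists [` wX]%fset, (opp d, setup_pin k); split; first by rewrite beep_setup.
by apply/same_circuit_link/linkP; exists (opp d), (setup_pin k); rewrite /= shiftK oppK.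
Qed.

Lemma setup_round_inv : pasc_inv 0 (round merging_algo X q0).
Proof.
move=> v; rewrite /round /= /mstep /=.
split=> //.
- by case.
- move=> k; apply/ffunP => d; rewrite ffunE /is_child.
  by case: k; rewrite ffunE recv_setup; case: (_ == Some d); rewrite /= ?andbF ?andbT.
- by case; rewrite /active_at expn0 dvd1n andbT.
- by rewrite expn0 !modn1.
Qed.

End Setup.

Lemma pasc_inv_run ldr j : (forall j', j' < j -> some_active j') ->
  pasc_inv j (run merging_algo X S1 S2 ldr D1 D2 j.+1).
Proof.
elim: j => [|j IH] act; first exact: setup_round_inv.
rewrite /run iterS; apply: pasc_round_inv; last exact: act.
by apply: IH => j' lt_j'; apply: act; rewrite ltnS ltnW.
Qed.

Lemma depth_lt_exp_inactive i k u : ~~ some_active i -> u \in X -> depth_of k u < 2 ^ i.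
Proof.
move=> inactive uX; rewrite ltnNge; apply/negP => le_h.
have [w wX hw] := depth_ancestor (roots_sub k) (forest_spf k) uX le_h.
have Dw : pdir_of k w != None.
  by rewrite -(depth_gt0 (roots_sub k) (forest_spf k) wX) hw expn_gt0.
move/existsP: inactive; apply; exists [` wX]%fset.
by case: k {le_h} hw Dw => hw Dw; rewrite /active_at /= hw dvdnn Dw ?orbT.
Qed.

Lemma inactive_after_log : ~~ some_active (trunc_log 2 #|` X|).+1.
Proof.
apply/existsP => -[u]; apply/negP.
have inactive k : ~~ active_at (trunc_log 2 #|` X|).+1 k (val u).
  apply/andP => -[Du dvd].
  have := dvdn_leq _ dvd.
  rewrite (depth_gt0 (roots_sub k) (forest_spf k) (valP u)) => /(_ Du).
  have := depth_lt_card (roots_sub k) (forest_spf k) (valP u).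
  have := trunc_log_ltn #|` X| (isT : 1 < 2); lia.
by rewrite (negbTE (inactive false)) (negbTE (inactive true)).
Qed.

End Run.

Local Open Scope fset_scope.

Theorem mainTheorem11 :
  exists (A : algo) (C : nat), terminating A /\
  forall (X S1 S2 : {fset node}) (ldr : node) (D1 D2 : node -> option 'I_6),
    connectedX X -> no_holes X -> ldr \in X ->
    S1 `<=` X -> S2 `<=` X -> S1 != fset0 -> S2 != fset0 ->
    IsSPF X S1 (par_of D1) -> IsSPF X S2 (par_of D2) ->
    exists t, t <= C * (trunc_log 2 #|` X|).+1 /\
      (forall v : X, final A (run A X S1 S2 ldr D1 D2 t v)) /\
      IsSPF X (S1 `|` S2) (par_of (out_dirs A X (run A X S1 S2 ldr D1 D2 t))).
Proof.
exists merging_algo, 3; split; first exact: merging_algo_terminating.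
move=> X S1 S2 ldr D1 D2 connX _ _ sub1 sub2 _ _ spf1 spf2.
have log_inactive := inactive_after_log sub1 sub2 spf1 spf2.
have [i inactive min_i] :=
  ex_minnP (ex_intro (fun j => ~~ some_active X S1 S2 D1 D2 j) _ log_inactive).
have active_before j : j < i -> some_active X S1 S2 D1 D2 j.
  by move=> lt_ji; apply: contraLR lt_ji => /min_i; rewrite -leqNgt.
have inv := pasc_inv_run sub1 sub2 spf1 spf2 connX ldr active_before.
have halt := halting_round sub1 sub2 spf1 spf2 connX inv inactive.
exists i.+2; split; [|split].
- by have := min_i _ log_inactive; lia.
- by move=> v; rewrite /run iterS; case: (halt v).
- apply: (merged_spf sub1 sub2 spf1 spf2) => u uX.
  have [_ out_u] := halt (Sub u uX); rewrite /out_dirs insubT; apply: etrans out_u _.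
  by rewrite /merged_dir !modn_small ?(depth_lt_exp_inactive sub1 sub2 spf1 spf2 _ inactive).
Qed.
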